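(* In the two-SP bandwidth game with minimum small-cell bandwidth constraints $B_{i,S}\ge B_{i,S}^0$ (described in the context), there exists a unique pure-strategy Nash equilibrium $(B_{1,S}^*,B_{2,S}^* )$. Moreover, the total small-cell bandwidth at this equilibrium is no less than that at the unconstrained equilibrium: $$B_{1,S}^*+B_{2,S}^*\ \ge\ B_{1,S}^{\mathrm{free}}+B_{2,S}^{\mathrm{free}}=\frac{\epsilon N_f(B_1+B_2)}{\epsilon N_f+N_m}.$$
   Context: Fixed parameters: $\alpha\in(0,1)$; densities $N_m>0$ (mobile users) and $N_f>0$ (fixed users); spectral efficiency $R_0>0$; common small-cell density $\lambda_S>1$ (macro density normalized to 1); total bandwidths $B_1,B_2>0$; regulatory lower bounds $B_{i,S}^0\in[0,B_i]$. Utility $u(r)=\frac{r^{1-\alpha}}{1-\alpha}$, $u'(r)=r^{-\alpha}$. Let $\epsilon=\lambda_S^{1/\alpha-1}$. Two-SP bandwidth game: SP $i\in\{1,2\}$ chooses small-cell bandwidth $B_{i,S}\in[B_{i,S}^0,B_i]$ and sets $B_{i,M}=B_i-B_{i,S}$. Given a profile, prices are market-clearing, mobile users use macro-cells and fixed users use small-cells, so the average rates are $R_S=\frac{\lambda_S(B_{1,S}+B_{2,S})R_0}{N_f}$ and $R_M=\frac{(B_{1,M}+B_{2,M})R_0}{N_m}$, and SP $i$'s payoff (revenue) is $S_i=R_0B_{i,M}R_M^{-\alpha}+R_0\lambda_SB_{i,S}R_S^{-\alpha}$ (a term with zero bandwidth is $0$). Define $B_{i,S}^{\mathrm{free}}=\frac{\epsilon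 N_fB_i}{\epsilon N_f+N_m}$, the equilibrium small-cell bandwidth of SP $i$ when there are no constraints ($B_{i,S}^0=0$). *)

From Stdlib Require Import Reals.
Open Scope R_scope.

Definition rpow_neg (alpha r : R) : R := Rpower r (- alpha).

(* A revenue term  c * B * R^(-alpha); it is 0 when the bandwidth B is 0
   (we guard on B <= 0, which for feasible profiles means B = 0). *)
Definition rev_term (alpha c B Rt : R) : R :=
  if Rle_dec B 0 then 0 else c * B * rpow_neg alpha Rt.

Definition RS (lamS R0 Nf b1 b2 : R) : R := lamS * (b1 + b2) * R0 / Nf.
Definition RM (R0 Nm B1 B2 b1 b2 : R) : R := ((B1 - b1) + (B2 - b2)) * R0 / Nm.

Definition payoff (alpha Nm Nf R0 lamS B1 B2 Bi bi b1 b2 : R) : R :=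
  rev_term alpha R0 (Bi - bi) (RM R0 Nm B1 B2 b1 b2)
  + rev_term alpha (R0 * lamS) bi (RS lamS R0 Nf b1 b2).

Definition S1 (alpha Nm Nf R0 lamS B1 B2 b1 b2 : R) : R :=
  payoff alpha Nm Nf R0 lamS B1 B2 B1 b1 b1 b2.
Definition S2 (alpha Nm Nf R0 lamS B1 B2 b1 b2 : R) : R :=
  payoff alpha Nm Nf R0 lamS B1 B2 B2 b2 b1 b2.

Definition is_NE (alpha Nm Nf R0 lamS B1 B2 B10 B20 b1 b2 : R) : Prop :=
  B10 <= b1 <= B1 /\ B20 <= b2 <= B2 /\
  (forall b1', B10 <= b1' <= B1 ->
     S1 alpha Nm Nf R0 lamS B1 B2 b1' b2 <= S1 alpha Nm Nf R0 lamS B1 B2 b1 b2) /\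
  (forall b2', B20 <= b2' <= B2 ->
     S2 alpha Nm Nf R0 lamS B1 B2 b1 b2' <= S2 alpha Nm Nf R0 lamS B1 B2 b1 b2).

Definition eps (alpha lamS : R) : R := Rpower lamS (1 / alpha - 1).

Definition Bfree (alpha Nm Nf lamS Bi : R) : R :=
  eps alpha lamS * Nf * Bi / (eps alpha lamS * Nf + Nm).

From Stdlib Require Import Reals Lra Psatz.
From Coquelicot Require Import Coquelicot.
Open Scope R_scope.

(* Let x be the total small-cell bandwidth and rho(x) = lam R_S^(-al) / R_M^(-al) the ratio of
   the unit prices; rho decreases strictly and equals 1 exactly at the unconstrained total.  The
   derivative of an SP's revenue has the sign of a "marginal" which, for a fixed total, is affine
   and decreasing in its own bandwidth, and which also decreases when that SP alone buys more; so
   best responses are exactly the points satisfying the first-order conditions of the box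
   constraints.  Existence: for each total x, clamp the zero of each SP's marginal into its
   feasible interval; by the intermediate value theorem some x is reproduced as the sum of the
   two clamped bandwidths.  Uniqueness: two solutions are compared SP by SP, or through the sum
   of the two marginals, which is (2 - al)(rho(x) - 1).  The same identity shows that below the
   unconstrained total both SPs would gain from more small-cell bandwidth. *)

Lemma Rpower_gt0 x y : 0 < Rpower x y.
Proof. apply exp_pos. Qed.

Lemma Rpower_opp_lt a b c : 0 < c -> 0 < a < b -> Rpower b (- c) < Rpower a (- c).
Proof.
  intros Hc Hab. rewrite !Rpower_Ropp. apply Rinv_lt_contravar.
  - apply Rmult_lt_0_compat; apply Rpower_gt0.
  - apply Rlt_Rpower_l; lra.
Qed.

Lemma Rpower_inv_exp v a : 0 < v -> a <> 0 -> Rpower (Rpower v (/ a)) a = v.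
Proof.
  intros Hv Ha. rewrite Rpower_mult, Rinv_l by exact Ha. apply Rpower_1, Hv.
Qed.

Lemma Rpower_le_of_le_root a y v : 0 < a -> 0 < v -> 0 < y <= Rpower v (/ a) -> Rpower y a <= v.
Proof.
  intros Ha Hv Hy. rewrite <- (Rpower_inv_exp v a Hv) by lra.
  apply Rle_Rpower_l; lra.
Qed.

Lemma Rdiv_le_cross a b c d : 0 < b -> 0 < d -> a * d <= c * b -> a / b <= c / d.
Proof.
  intros Hb Hd H.
  replace (a / b) with (a * d * / (b * d)) by (field; repeat split; lra).
  replace (c / d) with (c * b * / (b * d)) by (field; repeat split; lra).
  apply Rmult_le_compat_r; [left; apply Rinv_0_lt_compat; nra | exact H].
Qed.

Lemma Rdiv_lt_cross a b c d : 0 < b -> 0 < d -> a * d < c * b -> a / b < c / d.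
Proof.
  intros Hb Hd H.
  replace (a / b) with (a * d * / (b * d)) by (field; repeat split; lra).
  replace (c / d) with (c * b * / (b * d)) by (field; repeat split; lra).
  apply Rmult_lt_compat_r; [apply Rinv_0_lt_compat; nra | exact H].
Qed.

Lemma ex_derive_continuity_pt f x : ex_derive f x -> continuity_pt f x.
Proof. intros H. apply continuity_pt_filterlim, (ex_derive_continuous f x H). Qed.

(* [a * (a c)^(-al)] behaves like [a^(1-al)] at [0+]; for [a <= 0] the junk value [ln (a c) = 0] makes it [a]. *)
Lemma continuity_pt_mul_Rpower_opp_0 al c : 0 < al < 1 -> 0 < c ->
  continuity_pt (fun a => a * Rpower (a * c) (- al)) 0.
Proof.
  intros Hal Hc e He. set (w := e / Rpower c (- al)).
  assert (Hw : 0 < w) by (apply Rdiv_lt_0_compat; [lra | apply Rpower_gt0]).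
  exists (Rmin e (Rpower w (/ (1 - al)))). split.
  { apply Rmin_glb_lt; [lra | apply Rpower_gt0]. }
  intros x [_ Hx]. simpl in *. unfold R_dist in *.
  rewrite Rmult_0_l, Rminus_0_r. rewrite Rminus_0_r in Hx.
  pose proof (Rmin_l e (Rpower w (/ (1 - al)))).
  pose proof (Rmin_r e (Rpower w (/ (1 - al)))).
  destruct (Rle_dec x 0) as [Hle | Hgt].
  - unfold Rpower at 1. unfold ln. destruct (Rlt_dec 0 (x * c)); [exfalso; nra |].
    rewrite Rmult_0_r, exp_0, Rmult_1_r. lra.
  - rewrite Rabs_pos_eq in Hx by lra.
    assert (Hpow : x * Rpower (x * c) (- al) = Rpower x (1 - al) * Rpower c (- al)).
    { rewrite <- Rpower_mult_distr by lra. unfold Rminus. rewrite Rpower_plus, Rpower_1 by lra. ring. }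
    assert (Hlt : Rpower x (1 - al) < w).
    { rewrite <- (Rpower_inv_exp w (1 - al)) by lra. apply Rlt_Rpower_l; lra. }
    rewrite Hpow, Rabs_pos_eq by (pose proof (Rpower_gt0 x (1 - al)); pose proof (Rpower_gt0 c (- al)); nra).
    replace e with (w * Rpower c (- al)) by (unfold w; pose proof (Rpower_gt0 c (- al)); field; repeat split; lra).
    apply Rmult_lt_compat_r; [apply Rpower_gt0 | exact Hlt].
Qed.

Lemma continuity_pt_mul_Rpower_opp al c d a : 0 < al < 1 -> 0 < c -> 0 <= d -> 0 <= a ->
  continuity_pt (fun s => s * Rpower ((s + d) * c) (- al)) a.
Proof.
  intros Hal Hc Hd Ha. destruct (Rlt_le_dec 0 (a + d)) as [Hpos | Hle].
  - apply ex_derive_continuity_pt. unfold Rpower. auto_derive. nra.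
  - assert (a = 0) as -> by lra. assert (d = 0) as -> by lra.
    apply continuity_pt_ext with (f := fun s => s * Rpower (s * c) (- al)).
    + intro s. rewrite Rplus_0_r. reflexivity.
    + apply continuity_pt_mul_Rpower_opp_0; assumption.
Qed.

Lemma MVT_open f df a b : a < b ->
  (forall c, a < c < b -> is_derive f c (df c)) ->
  (forall c, a <= c <= b -> continuity_pt f c) ->
  exists c, a < c < b /\ f b - f a = df c * (b - a).
Proof.
  intros Hab Hd Hc.
  pose (pr1 c (P : a < c < b) :=
     exist (fun l => derivable_pt_abs f c l) (df c) (proj1 (is_derive_Reals f c (df c)) (Hd c P))).
  pose (pr2 c (P : a < c < b) := derivable_pt_id c).
  destruct (MVT f id a b pr1 pr2 Hab Hc) as [c [P HP]].
  { intros c _. apply derivable_continuous_pt, derivable_pt_id. }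
  exists c. split; [exact P |].
  unfold pr1, pr2 in HP. simpl in HP. rewrite derive_pt_id in HP. unfold id in HP. lra.
Qed.

Lemma continuity_pt_lt_near f x k : continuity_pt f x -> f x < k ->
  exists d, 0 < d /\ forall y, Rabs (y - x) < d -> f y < k.
Proof.
  intros Hc Hf. destruct (Hc (k - f x)) as [d [Hd H]]; [lra |].
  exists d. split; [exact Hd |]. intros y Hy.
  destruct (Req_dec y x) as [-> | Hne]; [exact Hf |].
  assert (Hd' : Rabs (f y - f x) < k - f x) by (apply H; repeat split; auto).
  apply Rabs_def2 in Hd'. lra.
Qed.

Lemma continuity_pt_gt_near f x k : continuity_pt f x -> k < f x ->
  exists d, 0 < d /\ forall y, Rabs (y - x) < d -> k < f y.
Proof.
  intros Hc Hf. destruct (continuity_pt_lt_near (fun y => - f y) x (- k)) as [d [Hd H]].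
  - apply continuity_pt_opp, Hc.
  - lra.
  - exists d. split; [exact Hd |]. intros y Hy. specialize (H y Hy). lra.
Qed.

Definition clamp lo hi v := Rmin hi (Rmax lo v).

Lemma clamp_bounds lo hi v : lo <= hi -> lo <= clamp lo hi v <= hi.
Proof. intros H. unfold clamp, Rmin, Rmax. repeat destruct Rle_dec; lra. Qed.

Lemma clamp_gt_lo lo hi v : lo <= hi -> lo < clamp lo hi v -> clamp lo hi v <= v.
Proof. intros H. unfold clamp, Rmin, Rmax. repeat destruct Rle_dec; lra. Qed.

Lemma clamp_lt_hi lo hi v : lo <= hi -> clamp lo hi v < hi -> v <= clamp lo hi v.
Proof. intros H. unfold clamp, Rmin, Rmax. repeat destruct Rle_dec; lra. Qed.

Lemma clamp_ge lo hi v : lo <= hi -> v <= hi -> v <= clamp lo hi v.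
Proof. intros H. unfold clamp, Rmin, Rmax. repeat destruct Rle_dec; lra. Qed.

Lemma clamp_le lo hi v : lo <= v -> clamp lo hi v <= v.
Proof. intros H. unfold clamp, Rmin, Rmax. repeat destruct Rle_dec; lra. Qed.

Lemma clamp_id hi v : clamp hi hi v = hi.
Proof. unfold clamp, Rmin, Rmax. repeat destruct Rle_dec; lra. Qed.

Lemma clamp_lipschitz lo hi v w : Rabs (clamp lo hi v - clamp lo hi w) <= Rabs (v - w).
Proof. unfold clamp, Rmin, Rmax. repeat destruct Rle_dec; split_Rabs; lra. Qed.

Lemma continuity_pt_clamp lo hi g x : continuity_pt g x ->
  continuity_pt (fun y => clamp lo hi (g y)) x.
Proof.
  intros Hg. apply (continuity_pt_comp g (clamp lo hi)); [exact Hg |].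
  intros e He. exists e. split; [exact He |].
  intros v [_ Hv]. simpl in *. unfold R_dist in *.
  eapply Rle_lt_trans; [apply clamp_lipschitz | exact Hv].
Qed.

Lemma IVT_interv_decr f a b : a < b ->
  (forall c, a <= c <= b -> continuity_pt f c) -> 0 <= f a -> f b < 0 ->
  exists z, a <= z <= b /\ f z = 0.
Proof.
  intros Hab Hc Ha Hb. destruct (Rle_lt_or_eq_dec _ _ Ha) as [Hlt | Heq].
  - destruct (Ranalysis5.IVT_interv (fun x => - f x) a b) as [z [Hz Hfz]]; try lra.
    + intros c Hca. apply continuity_pt_opp, Hc, Hca.
    + exists z. split; [exact Hz | lra].
  - exists a. split; [lra | auto].
Qed.

Section Game.

Variables al Nm Nf R0 lam : R.
Hypothesis Hal : 0 < al < 1.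
Hypothesis HNm : 0 < Nm.
Hypothesis HNf : 0 < Nf.
Hypothesis HR0 : 0 < R0.
Hypothesis Hlam : 1 < lam.
#[local] Set Default Proof Using "All".

(* Unit prices [R_M^(-al)] and [R_S^(-al)] as functions of the total macro-cell
   bandwidth [z] and the total small-cell bandwidth [x]. *)
Definition macro_price z := Rpower (z * R0 / Nm) (- al).
Definition small_price x := Rpower (lam * x * R0 / Nf) (- al).
Definition price_ratio B x := lam * small_price x / macro_price (B - x).
Definition free_total B := eps al lam * Nf * B / (eps al lam * Nf + Nm).

Lemma macro_price_pos z : 0 < macro_price z.
Proof. apply Rpower_gt0. Qed.

Lemma price_ratio_pos B x : 0 < price_ratio B x.
Proof.
  unfold price_ratio. pose proof (macro_price_pos (B - x)).
  assert (0 < small_price x) by apply Rpower_gt0.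
  apply Rdiv_lt_0_compat; nra.
Qed.

Lemma macro_price_decr z z' : 0 < z -> z < z' -> macro_price z' < macro_price z.
Proof.
  intros Hz Hzz. apply Rpower_opp_lt; [lra | split].
  - apply Rdiv_lt_0_compat; nra.
  - apply Rmult_lt_compat_r; [apply Rinv_0_lt_compat; lra |]. nra.
Qed.

Lemma small_price_decr x y : 0 < x -> x < y -> small_price y < small_price x.
Proof.
  intros Hx Hxy. apply Rpower_opp_lt; [lra | split].
  - apply Rdiv_lt_0_compat; [apply Rmult_lt_0_compat |]; nra.
  - apply Rmult_lt_compat_r; [apply Rinv_0_lt_compat; lra |].
    apply Rmult_lt_compat_r; [lra |]. nra.
Qed.

Lemma price_ratio_decr B x y : 0 < x -> x < y -> y < B -> price_ratio B y < price_ratio B x.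
Proof.
  intros Hx Hxy HyB. unfold price_ratio.
  pose proof (small_price_decr x y Hx Hxy).
  pose proof (macro_price_decr (B - y) (B - x) ltac:(lra) ltac:(lra)).
  assert (0 < small_price y) by apply Rpower_gt0.
  pose proof (macro_price_pos (B - x)).
  apply Rdiv_lt_cross; try apply macro_price_pos.
  rewrite !Rmult_assoc. apply Rmult_lt_compat_l; [lra |].
  apply Rmult_le_0_lt_compat; lra.
Qed.

Lemma free_total_bounds B : 0 < B -> 0 < free_total B < B.
Proof.
  intros HB. assert (He : 0 < eps al lam) by apply Rpower_gt0.
  unfold free_total. set (e := eps al lam) in *. split.
  - apply Rdiv_lt_0_compat; [apply Rmult_lt_0_compat |]; nra.
  - apply Rlt_div_l; nra.
Qed.

(* The unconstrained equilibrium equalizes the two unit prices: [lam * R_S^(-al) = R_M^(-al)],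
   and [eps = lam^(1/al - 1)] is exactly what solves this for the small-cell share. *)
Lemma price_ratio_free_total B : 0 < B -> price_ratio B (free_total B) = 1.
Proof.
  intros HB. assert (He : 0 < eps al lam) by apply Rpower_gt0.
  unfold price_ratio, small_price, macro_price, free_total.
  set (e := eps al lam) in *. set (D := e * Nf + Nm).
  assert (HD : 0 < D) by (unfold D; nra).
  replace (lam * (e * Nf * B / D) * R0 / Nf) with ((lam * e) * (B * R0 / D)) by (field; repeat split; lra).
  replace ((B - e * Nf * B / D) * R0 / Nm) with (B * R0 / D) by (unfold D in *; field; split; lra).
  assert (Hk : 0 < B * R0 / D) by (apply Rdiv_lt_0_compat; nra).
  rewrite <- Rpower_mult_distr by nra.
  assert (Hle : lam * e = Rpower lam (/ al)).
  { unfold e, eps. replace (/ al) with (1 + (1 / al - 1)) by (field; repeat split; lra).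
    rewrite Rpower_plus, Rpower_1 by lra. reflexivity. }
  rewrite Hle, Rpower_mult.
  replace (/ al * - al) with (- (1)) by (field; repeat split; lra).
  rewrite Rpower_Ropp, Rpower_1 by lra.
  pose proof (Rpower_gt0 (B * R0 / D) (- al)). field. lra.
Qed.

Lemma price_ratio_gt1 B x : 0 < B -> 0 < x < free_total B -> 1 < price_ratio B x.
Proof.
  intros HB Hx. pose proof (free_total_bounds B HB).
  rewrite <- (price_ratio_free_total B HB). apply price_ratio_decr; lra.
Qed.

Lemma free_total_lt B x : 0 < B -> 0 < x -> price_ratio B x < 1 -> free_total B < x.
Proof.
  intros HB Hx Hr. destruct (Rlt_le_dec (free_total B) x) as [| Hle]; [assumption |].
  destruct (Rle_lt_or_eq_dec _ _ Hle) as [Hlt | ->].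
  - pose proof (price_ratio_gt1 B x HB (conj Hx Hlt)). lra.
  - rewrite price_ratio_free_total in Hr by exact HB. lra.
Qed.

Lemma price_ratio_powers B x : 0 < x < B ->
  price_ratio B x = lam * Rpower ((B - x) * R0 / Nm) al / Rpower (lam * x * R0 / Nf) al.
Proof.
  intros H. unfold price_ratio, small_price, macro_price. rewrite !Rpower_Ropp.
  pose proof (Rpower_gt0 ((B - x) * R0 / Nm) al).
  pose proof (Rpower_gt0 (lam * x * R0 / Nf) al).
  field. lra.
Qed.

Lemma price_ratio_large_near_0 B K M : 0 < B -> 0 < K -> 0 < M ->
  exists x, 0 < x <= M /\ x < B /\ K <= price_ratio B x.
Proof.
  intros HB HK HM.
  set (N := Rpower (B / 2 * R0 / Nm) al). assert (HN : 0 < N) by apply Rpower_gt0.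
  set (v := lam * N / K). assert (Hv : 0 < v) by (apply Rdiv_lt_0_compat; nra).
  set (x0 := Nf * Rpower v (/ al) / (lam * R0)).
  assert (Hx0 : 0 < x0) by (pose proof (Rpower_gt0 v (/ al)); apply Rdiv_lt_0_compat; nra).
  pose proof (Rmin_l x0 (Rmin M (B / 2))). pose proof (Rmin_r x0 (Rmin M (B / 2))).
  pose proof (Rmin_l M (B / 2)). pose proof (Rmin_r M (B / 2)).
  set (x := Rmin x0 (Rmin M (B / 2))) in *.
  assert (Hx : 0 < x) by (apply Rmin_glb_lt; [| apply Rmin_glb_lt]; lra).
  exists x. split; [split; lra | split; [lra |]].
  rewrite price_ratio_powers by lra.
  assert (Hnum : N <= Rpower ((B - x) * R0 / Nm) al).
  { apply Rle_Rpower_l; [lra | split].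
    - apply Rdiv_lt_0_compat; nra.
    - apply Rmult_le_compat_r; [left; apply Rinv_0_lt_compat; lra |]. nra. }
  assert (Hden : Rpower (lam * x * R0 / Nf) al <= v).
  { apply Rpower_le_of_le_root; [lra | exact Hv | split].
    - apply Rdiv_lt_0_compat; [apply Rmult_lt_0_compat |]; nra.
    - replace (Rpower v (/ al)) with (lam * x0 * R0 / Nf) by (unfold x0; field; repeat split; lra).
      apply Rmult_le_compat_r; [left; apply Rinv_0_lt_compat; lra |].
      apply Rmult_le_compat_r; [lra |]. nra. }
  pose proof (Rpower_gt0 (lam * x * R0 / Nf) al).
  set (A := Rpower ((B - x) * R0 / Nm) al) in *. set (D := Rpower (lam * x * R0 / Nf) al) in *.
  replace K with (lam * N / v) by (unfold v; field; repeat split; lra).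
  apply Rdiv_le_cross; [exact Hv | apply Rpower_gt0 |].
  rewrite !Rmult_assoc. apply Rmult_le_compat_l; [lra |]. apply Rmult_le_compat; lra.
Qed.

Lemma price_ratio_small_near_total B K M : 0 < B -> 0 < K -> 0 < M ->
  exists x, B - M <= x /\ 0 < x < B /\ price_ratio B x <= K.
Proof.
  intros HB HK HM.
  set (N := Rpower (lam * (B / 2) * R0 / Nf) al). assert (HN : 0 < N) by apply Rpower_gt0.
  set (v := K * N / lam). assert (Hv : 0 < v) by (apply Rdiv_lt_0_compat; nra).
  set (z0 := Nm * Rpower v (/ al) / R0).
  assert (Hz0 : 0 < z0) by (pose proof (Rpower_gt0 v (/ al)); apply Rdiv_lt_0_compat; nra).
  pose proof (Rmin_l z0 (Rmin M (B / 2))). pose proof (Rmin_r z0 (Rmin M (B / 2))).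
  pose proof (Rmin_l M (B / 2)). pose proof (Rmin_r M (B / 2)).
  set (z := Rmin z0 (Rmin M (B / 2))) in *.
  assert (Hz : 0 < z) by (apply Rmin_glb_lt; [| apply Rmin_glb_lt]; lra).
  exists (B - z). split; [lra | split; [split; lra |]].
  rewrite price_ratio_powers by lra. replace (B - (B - z)) with z by ring.
  assert (Hden : N <= Rpower (lam * (B - z) * R0 / Nf) al).
  { apply Rle_Rpower_l; [lra | split].
    - apply Rdiv_lt_0_compat; [apply Rmult_lt_0_compat |]; nra.
    - apply Rmult_le_compat_r; [left; apply Rinv_0_lt_compat; lra |].
      apply Rmult_le_compat_r; [lra |]. nra. }
  assert (Hnum : Rpower (z * R0 / Nm) al <= v).
  { apply Rpower_le_of_le_root; [lra | exact Hv | split].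
    - apply Rdiv_lt_0_compat; nra.
    - replace (Rpower v (/ al)) with (z0 * R0 / Nm) by (unfold z0; field; repeat split; lra).
      apply Rmult_le_compat_r; [left; apply Rinv_0_lt_compat; lra |]. nra. }
  pose proof (Rpower_gt0 (z * R0 / Nm) al).
  set (A := Rpower (z * R0 / Nm) al) in *. set (D := Rpower (lam * (B - z) * R0 / Nf) al) in *.
  replace K with (lam * v / N) by (unfold v; field; repeat split; lra).
  apply Rdiv_le_cross; [apply Rpower_gt0 | exact HN |].
  rewrite !Rmult_assoc. apply Rmult_le_compat_l; [lra |]. apply Rmult_le_compat; lra.
Qed.

Definition revenue Bi Bj bj t :=
  R0 * (Bi - t) * macro_price ((Bi - t) + (Bj - bj)) + R0 * lam * t * small_price (t + bj).
Definition marginal Bi B x b :=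
  price_ratio B x * (1 - al * b / x) - 1 + al * (Bi - b) / (B - x).

Lemma rev_term_pos c B Rt : 0 <= B -> rev_term al c B Rt = c * B * Rpower Rt (- al).
Proof.
  intros HB. unfold rev_term, rpow_neg. destruct (Rle_dec B 0).
  - replace B with 0 by lra. ring.
  - reflexivity.
Qed.

Lemma S1_revenue B1 B2 b1 b2 : 0 <= b1 <= B1 ->
  S1 al Nm Nf R0 lam B1 B2 b1 b2 = revenue B1 B2 b2 b1.
Proof.
  intros H. unfold S1, payoff, revenue, macro_price, small_price, RM, RS.
  rewrite !rev_term_pos by lra. reflexivity.
Qed.

Lemma S2_revenue B1 B2 b1 b2 : 0 <= b2 <= B2 ->
  S2 al Nm Nf R0 lam B1 B2 b1 b2 = revenue B2 B1 b1 b2.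
Proof.
  intros H. unfold S2, payoff, revenue, macro_price, small_price, RM, RS.
  rewrite !rev_term_pos by lra.
  replace (B1 - b1 + (B2 - b2)) with (B2 - b2 + (B1 - b1)) by ring.
  replace (b1 + b2) with (b2 + b1) by ring. reflexivity.
Qed.

Lemma revenue_derive Bi Bj bj t : 0 <= bj <= Bj -> 0 < t < Bi ->
  is_derive (revenue Bi Bj bj) t
    (R0 * macro_price ((Bi - t) + (Bj - bj)) * marginal Bi (Bi + Bj) (t + bj) t).
Proof.
  intros Hb Ht. unfold revenue, marginal, price_ratio.
  replace (Bi + Bj - (t + bj)) with ((Bi - t) + (Bj - bj)) by ring.
  unfold macro_price, small_price, Rpower. auto_derive.
  - repeat split; repeat apply Rmult_lt_0_compat; try apply Rinv_0_lt_compat; lra.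
  - unfold Rminus, Rdiv.
    set (P := exp (- al * ln ((Bi + - t + (Bj + - bj)) * R0 * / Nm))).
    assert (0 < P) by apply exp_pos.
    field. repeat split; lra.
Qed.

Lemma revenue_continuity Bi Bj bj t : 0 <= bj <= Bj -> 0 <= t <= Bi ->
  continuity_pt (revenue Bi Bj bj) t.
Proof.
  intros Hb Ht.
  set (g d c s := s * Rpower ((s + d) * c) (- al)).
  apply continuity_pt_ext with
    (f := plus_fct (fun s => R0 * g (Bj - bj) (R0 / Nm) (Bi - s))
                   (fun s => R0 * lam * g bj (lam * R0 / Nf) s)).
  { intro s. unfold plus_fct, revenue, macro_price, small_price, g.
    replace ((Bi - s + (Bj - bj)) * (R0 / Nm)) with ((Bi - s + (Bj - bj)) * R0 / Nm) by (unfold Rdiv; ring).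
    replace ((s + bj) * (lam * R0 / Nf)) with (lam * (s + bj) * R0 / Nf) by (unfold Rdiv; ring).
    ring. }
  apply continuity_pt_plus.
  - apply (continuity_pt_scal (fun s => g (Bj - bj) (R0 / Nm) (Bi - s)) R0).
    apply (continuity_pt_comp (fun s => Bi - s) (g (Bj - bj) (R0 / Nm))).
    + apply continuity_pt_minus; [apply continuity_pt_const; intros ??; reflexivity | apply continuity_pt_id].
    + apply continuity_pt_mul_Rpower_opp; try apply Rdiv_lt_0_compat; lra.
  - apply (continuity_pt_scal (g bj (lam * R0 / Nf)) (R0 * lam)).
    apply continuity_pt_mul_Rpower_opp; try apply Rdiv_lt_0_compat; nra.
Qed.

Lemma revenue_MVT Bi Bj bj a b : 0 <= bj <= Bj -> 0 <= a -> a < b -> b <= Bi ->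
  exists c, a < c < b /\ revenue Bi Bj bj b - revenue Bi Bj bj a =
    R0 * macro_price ((Bi - c) + (Bj - bj)) * marginal Bi (Bi + Bj) (c + bj) c * (b - a).
Proof.
  intros Hb Ha Hab HbB. apply MVT_open; [exact Hab | |].
  - intros c Hc. apply revenue_derive; lra.
  - intros c Hc. apply revenue_continuity; lra.
Qed.

Lemma revenue_lt_of_marginal_pos Bi Bj bj a b : 0 <= bj <= Bj -> 0 <= a -> a < b -> b <= Bi ->
  (forall c, a < c < b -> 0 < marginal Bi (Bi + Bj) (c + bj) c) ->
  revenue Bi Bj bj a < revenue Bi Bj bj b.
Proof.
  intros Hb Ha Hab HbB Hpos.
  destruct (revenue_MVT Bi Bj bj a b Hb Ha Hab HbB) as [c [Hc Hdiff]].
  pose proof (macro_price_pos (Bi - c + (Bj - bj))). specialize (Hpos c Hc).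
  assert (0 < R0 * macro_price (Bi - c + (Bj - bj)) * marginal Bi (Bi + Bj) (c + bj) c * (b - a)).
  { repeat apply Rmult_lt_0_compat; lra. }
  lra.
Qed.

Lemma revenue_lt_of_marginal_neg Bi Bj bj a b : 0 <= bj <= Bj -> 0 <= a -> a < b -> b <= Bi ->
  (forall c, a < c < b -> marginal Bi (Bi + Bj) (c + bj) c < 0) ->
  revenue Bi Bj bj b < revenue Bi Bj bj a.
Proof.
  intros Hb Ha Hab HbB Hneg.
  destruct (revenue_MVT Bi Bj bj a b Hb Ha Hab HbB) as [c [Hc Hdiff]].
  pose proof (macro_price_pos (Bi - c + (Bj - bj))). specialize (Hneg c Hc).
  assert (0 < R0 * macro_price (Bi - c + (Bj - bj)) * - marginal Bi (Bi + Bj) (c + bj) c * (b - a)).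
  { repeat apply Rmult_lt_0_compat; lra. }
  lra.
Qed.

(* If one SP buys more while the other does not, the total rises (so [price_ratio] falls), the
   SP's share [b / x] of the small cells rises and its share of the macro cells falls. *)
Lemma marginal_lt_of_own_lt Bi B x y p q : 0 <= p -> 0 < x <= y -> y < B -> p < q <= Bi ->
  0 <= y - q <= x - p -> x - p <= B - Bi -> marginal Bi B y q < marginal Bi B x p.
Proof.
  intros Hp Hxy HyB Hpq Hq HBi. unfold marginal.
  assert (Hshare : al * p / x <= al * q / y).
  { apply Rdiv_le_cross; [lra | lra |]. assert (p * y <= q * x) by nra. nra. }
  assert (Hshare1 : al * q / y <= al) by (apply Rle_div_l; nra).
  assert (Hmacro : al * (Bi - q) / (B - y) <= al * (Bi - p) / (B - x)).
  { apply Rdiv_le_cross; [lra | lra |].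
    assert ((Bi - q) * (B - x) <= (Bi - p) * (B - y)) by nra. nra. }
  assert (Hsmall : price_ratio B y * (1 - al * q / y) < price_ratio B x * (1 - al * p / x)).
  { pose proof (price_ratio_pos B y). pose proof (price_ratio_pos B x).
    destruct (Rle_lt_or_eq_dec _ _ (proj2 Hxy)) as [Hlt | <-].
    - pose proof (price_ratio_decr B x y ltac:(lra) Hlt HyB). nra.
    - assert (al * p / x < al * q / x).
      { apply Rmult_lt_compat_r; [apply Rinv_0_lt_compat |]; nra. }
      nra. }
  lra.
Qed.

Lemma marginal_add B1 B2 x b1 b2 : 0 < x < B1 + B2 ->
  marginal B1 (B1 + B2) x b1 + marginal B2 (B1 + B2) x b2 =
  price_ratio (B1 + B2) x * (2 - al * (b1 + b2) / x) - 2 + al * (B1 + B2 - (b1 + b2)) / (B1 + B2 - x).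
Proof. intros Hx. unfold marginal. field. lra. Qed.

Lemma marginal_add_total B1 B2 b1 b2 : 0 < b1 + b2 < B1 + B2 ->
  marginal B1 (B1 + B2) (b1 + b2) b1 + marginal B2 (B1 + B2) (b1 + b2) b2 =
  (2 - al) * (price_ratio (B1 + B2) (b1 + b2) - 1).
Proof. intros Hx. rewrite marginal_add by exact Hx. field. lra. Qed.

Lemma marginal_own_continuity Bi B bj b : 0 < b + bj < B ->
  continuity_pt (fun s => marginal Bi B (s + bj) s) b.
Proof.
  intros Hx. apply ex_derive_continuity_pt.
  unfold marginal, price_ratio, macro_price, small_price, Rpower. auto_derive.
  repeat split; try apply Rgt_not_eq, exp_pos; try lra;
    repeat apply Rmult_lt_0_compat; try apply Rinv_0_lt_compat; lra.
Qed.

Definition best_response Bi Bj lo bj b :=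
  lo <= b <= Bi /\ forall t, lo <= t <= Bi -> revenue Bi Bj bj t <= revenue Bi Bj bj b.
Definition equilibrium B1 B2 B10 B20 b1 b2 :=
  best_response B1 B2 B10 b2 b1 /\ best_response B2 B1 B20 b1 b2.
Definition first_order Bi B lo x b :=
  (lo < b -> 0 <= marginal Bi B x b) /\ (b < Bi -> marginal Bi B x b <= 0).

Lemma is_NE_equilibrium B1 B2 B10 B20 b1 b2 : 0 <= B10 -> 0 <= B20 ->
  is_NE al Nm Nf R0 lam B1 B2 B10 B20 b1 b2 <-> equilibrium B1 B2 B10 B20 b1 b2.
Proof.
  intros H1 H2. unfold is_NE, equilibrium, best_response. split.
  - intros [Hb1 [Hb2 [Hs1 Hs2]]]. split; split; try assumption; intros t Ht.
    + specialize (Hs1 t Ht). rewrite !S1_revenue in Hs1 by lra. exact Hs1.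
    + specialize (Hs2 t Ht). rewrite !S2_revenue in Hs2 by lra. exact Hs2.
  - intros [[Hb1 Hs1] [Hb2 Hs2]]. split; [exact Hb1 | split; [exact Hb2 | split]]; intros t Ht.
    + rewrite !S1_revenue by lra. exact (Hs1 t Ht).
    + rewrite !S2_revenue by lra. exact (Hs2 t Ht).
Qed.

Lemma equilibrium_sym B1 B2 B10 B20 b1 b2 :
  equilibrium B1 B2 B10 B20 b1 b2 -> equilibrium B2 B1 B20 B10 b2 b1.
Proof. unfold equilibrium. tauto. Qed.

Lemma best_response_of_first_order Bi Bj lo bj b : 0 <= lo <= b -> b <= Bi -> 0 <= bj <= Bj ->
  0 < b + bj < Bi + Bj -> first_order Bi (Bi + Bj) lo (b + bj) b -> best_response Bi Bj lo bj b.
Proof.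
  intros Hlo HbB Hbj Hx [Hup Hdown]. split; [lra |]. intros t Ht.
  destruct (Rtotal_order t b) as [Htb | [-> | Hbt]]; [left | lra | left].
  - apply revenue_lt_of_marginal_pos; try lra. intros c Hc.
    apply Rle_lt_trans with (marginal Bi (Bi + Bj) (b + bj) b); [apply Hup; lra |].
    apply marginal_lt_of_own_lt; lra.
  - apply revenue_lt_of_marginal_neg; try lra. intros c Hc.
    apply Rlt_le_trans with (marginal Bi (Bi + Bj) (b + bj) b); [| apply Hdown; lra].
    apply marginal_lt_of_own_lt; lra.
Qed.

Lemma first_order_of_best_response Bi Bj lo bj b : 0 <= lo -> 0 <= bj <= Bj ->
  0 < b + bj < Bi + Bj -> best_response Bi Bj lo bj b -> first_order Bi (Bi + Bj) lo (b + bj) b.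
Proof.
  intros Hlo Hbj Hx [Hb Hbest]. split; intros Hslack.
  - apply Rnot_lt_le. intros Hneg.
    destruct (continuity_pt_lt_near (fun s => marginal Bi (Bi + Bj) (s + bj) s) b 0)
      as [d [Hd Hnear]]; [apply marginal_own_continuity; lra | exact Hneg |].
    set (t := Rmax lo (b - d / 2)).
    assert (Ht : lo <= t /\ b - d / 2 <= t /\ t < b)
      by (split; [apply Rmax_l | split; [apply Rmax_r | apply Rmax_lub_lt; lra]]).
    assert (revenue Bi Bj bj b < revenue Bi Bj bj t).
    { apply revenue_lt_of_marginal_neg; try lra. intros c Hc. apply Hnear, Rabs_def1; lra. }
    specialize (Hbest t ltac:(lra)). lra.
  - apply Rnot_lt_le. intros Hpos.
    destruct (continuity_pt_gt_near (fun s => marginal Bi (Bi + Bj) (s + bj) s) b 0)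
      as [d [Hd Hnear]]; [apply marginal_own_continuity; lra | exact Hpos |].
    set (t := Rmin Bi (b + d / 2)).
    assert (Ht : t <= Bi /\ t <= b + d / 2 /\ b < t)
      by (split; [apply Rmin_l | split; [apply Rmin_r | apply Rmin_glb_lt; lra]]).
    assert (revenue Bi Bj bj b < revenue Bi Bj bj t).
    { apply revenue_lt_of_marginal_pos; try lra. intros c Hc. apply Hnear, Rabs_def1; lra. }
    specialize (Hbest t ltac:(lra)). lra.
Qed.

Lemma equilibrium_first_order B1 B2 B10 B20 b1 b2 : 0 <= B10 -> 0 <= B20 ->
  0 < b1 + b2 < B1 + B2 -> equilibrium B1 B2 B10 B20 b1 b2 ->
  first_order B1 (B1 + B2) B10 (b1 + b2) b1 /\ first_order B2 (B1 + B2) B20 (b1 + b2) b2.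
Proof.
  intros H10 H20 Hx [[Hb1 Hbest1] [Hb2 Hbest2]]. split.
  - apply first_order_of_best_response; [lra | lra | lra | split; assumption].
  - rewrite (Rplus_comm B1), (Rplus_comm b1).
    apply first_order_of_best_response; [lra | lra | lra | split; assumption].
Qed.

Lemma equilibrium_of_first_order B1 B2 B10 B20 b1 b2 : 0 <= B10 -> 0 <= B20 ->
  B10 <= b1 <= B1 -> B20 <= b2 <= B2 -> 0 < b1 + b2 < B1 + B2 ->
  first_order B1 (B1 + B2) B10 (b1 + b2) b1 -> first_order B2 (B1 + B2) B20 (b1 + b2) b2 ->
  equilibrium B1 B2 B10 B20 b1 b2.
Proof.
  intros H10 H20 Hb1 Hb2 Hx Hf1 Hf2. split.
  - apply best_response_of_first_order; [lra | lra | lra | lra | exact Hf1].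
  - rewrite (Rplus_comm B1), (Rplus_comm b1) in Hf2.
    apply best_response_of_first_order; [lra | lra | lra | lra | exact Hf2].
Qed.

Lemma marginal_opponent_full_neg Bi Bj x : 0 <= Bj < x -> x < Bi + Bj ->
  price_ratio (Bi + Bj) x < 1 - al -> marginal Bi (Bi + Bj) x (x - Bj) < 0.
Proof.
  intros Hx HxB Hr. unfold marginal.
  replace (Bi + Bj - x) with (Bi - (x - Bj)) by ring.
  replace (al * (Bi - (x - Bj)) / (Bi - (x - Bj))) with al by (field; lra).
  assert (0 <= al * (x - Bj) / x) by (apply Rdiv_le_0_compat; nra).
  pose proof (price_ratio_pos (Bi + Bj) x). nra.
Qed.

Lemma marginal_opponent_full_pos Bi Bj x : 0 <= Bj <= x -> 0 < x < Bi + Bj ->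
  1 < price_ratio (Bi + Bj) x -> 0 < marginal Bi (Bi + Bj) x (x - Bj).
Proof.
  intros Hx HxB Hr. unfold marginal.
  replace (Bi + Bj - x) with (Bi - (x - Bj)) by ring.
  replace (al * (Bi - (x - Bj)) / (Bi - (x - Bj))) with al by (field; lra).
  assert (al * (x - Bj) / x <= al) by (apply Rle_div_l; nra).
  nra.
Qed.

Lemma equilibrium_total_pos B1 B2 B10 B20 b1 b2 : 0 < B1 -> 0 < B2 -> 0 <= B10 -> 0 <= B20 ->
  equilibrium B1 B2 B10 B20 b1 b2 -> 0 < b1 + b2.
Proof.
  intros HB1 HB2 H10 H20 [[Hb1 Hbest] [Hb2 _]].
  apply Rnot_le_lt. intros Hle.
  assert (b1 = 0) as -> by lra. assert (b2 = 0) as -> by lra.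
  destruct (price_ratio_large_near_0 (B1 + B2) (/ (1 - al)) (B1 / 2)) as [x0 [Hx0 [Hx0B Hr]]];
    [lra | apply Rinv_0_lt_compat; lra | lra |].
  assert (revenue B1 B2 0 0 < revenue B1 B2 0 x0).
  { apply revenue_lt_of_marginal_pos; try lra. intros c Hc. rewrite Rplus_0_r. unfold marginal.
    replace (al * c / c) with al by (field; lra).
    assert (Hc1 : / (1 - al) < price_ratio (B1 + B2) c).
    { eapply Rle_lt_trans; [exact Hr | apply price_ratio_decr; lra]. }
    apply (Rmult_lt_compat_r (1 - al)) in Hc1; [| lra]. rewrite Rinv_l in Hc1 by lra.
    assert (0 < al * (B1 - c) / (B1 + B2 - c)) by (apply Rdiv_lt_0_compat; nra).
    lra. }
  specialize (Hbest x0 ltac:(lra)). lra.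
Qed.

Lemma equilibrium_total_lt_of_slack B1 B2 B10 B20 b1 b2 : 0 < B2 -> 0 <= B10 < B1 ->
  equilibrium B1 B2 B10 B20 b1 b2 -> b1 + b2 < B1 + B2.
Proof.
  intros HB2 H10 [[Hb1 Hbest] [Hb2 _]].
  apply Rnot_le_lt. intros Hle.
  assert (b1 = B1) as -> by lra. assert (b2 = B2) as -> by lra.
  destruct (price_ratio_small_near_total (B1 + B2) (1 - al) (B1 - B10)) as [x0 [Hx0 [Hx0B Hr]]];
    [lra | lra | lra |].
  assert (revenue B1 B2 B2 B1 < revenue B1 B2 B2 (x0 - B2)).
  { apply revenue_lt_of_marginal_neg; try lra. intros c Hc.
    replace c with (c + B2 - B2) at 2 by ring.
    apply marginal_opponent_full_neg; try lra.
    eapply Rlt_le_trans; [apply price_ratio_decr | exact Hr]; lra. }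
  specialize (Hbest (x0 - B2) ltac:(lra)). lra.
Qed.

Lemma equilibrium_total_lt B1 B2 B10 B20 b1 b2 : 0 < B1 -> 0 < B2 -> 0 <= B10 -> 0 <= B20 ->
  B10 < B1 \/ B20 < B2 -> equilibrium B1 B2 B10 B20 b1 b2 -> b1 + b2 < B1 + B2.
Proof.
  intros HB1 HB2 H10 H20 [Hs | Hs] He.
  - apply (equilibrium_total_lt_of_slack B1 B2 B10 B20); [lra | lra | exact He].
  - apply equilibrium_sym in He.
    pose proof (equilibrium_total_lt_of_slack B2 B1 B20 B10 b2 b1 HB1 (conj H20 Hs) He). lra.
Qed.

(* Two first-order profiles with totals [x <= y]: if some SP uses more in the second one,
   strict monotonicity of its marginal contradicts its first-order conditions; if both do,
   adding the two marginals contradicts the strict decrease of [price_ratio]. *)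
Lemma first_order_unique B1 B2 B10 B20 b1 b2 c1 c2 : 0 <= B10 -> 0 <= B20 ->
  B10 <= b1 <= B1 -> B20 <= b2 <= B2 -> B10 <= c1 <= B1 -> B20 <= c2 <= B2 ->
  0 < b1 + b2 -> b1 + b2 <= c1 + c2 -> c1 + c2 < B1 + B2 ->
  first_order B1 (B1 + B2) B10 (b1 + b2) b1 -> first_order B2 (B1 + B2) B20 (b1 + b2) b2 ->
  first_order B1 (B1 + B2) B10 (c1 + c2) c1 -> first_order B2 (B1 + B2) B20 (c1 + c2) c2 ->
  b1 = c1 /\ b2 = c2.
Proof.
  intros H10 H20 Hb1 Hb2 Hc1 Hc2 Hx Hxy Hy [K1 K2] [K3 K4] [L1 L2] [L3 L4].
  destruct (Rle_lt_dec c1 b1) as [H1 | H1]; destruct (Rle_lt_dec c2 b2) as [H2 | H2].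
  - split; lra.
  - exfalso. rewrite (Rplus_comm B1) in *.
    assert (marginal B2 (B2 + B1) (c1 + c2) c2 < marginal B2 (B2 + B1) (b1 + b2) b2)
      by (apply marginal_lt_of_own_lt; repeat split; lra).
    pose proof (L3 ltac:(lra)). pose proof (K4 ltac:(lra)). lra.
  - exfalso.
    assert (marginal B1 (B1 + B2) (c1 + c2) c1 < marginal B1 (B1 + B2) (b1 + b2) b1)
      by (apply marginal_lt_of_own_lt; repeat split; lra).
    pose proof (L1 ltac:(lra)). pose proof (K2 ltac:(lra)). lra.
  - exfalso.
    pose proof (marginal_add_total B1 B2 b1 b2 ltac:(lra)) as Sb.
    pose proof (marginal_add_total B1 B2 c1 c2 ltac:(lra)) as Sc.
    pose proof (price_ratio_decr (B1 + B2) (b1 + b2) (c1 + c2) ltac:(lra) ltac:(lra) ltac:(lra)).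
    assert (0 < (2 - al) * (price_ratio (B1 + B2) (b1 + b2) - price_ratio (B1 + B2) (c1 + c2)))
      by (apply Rmult_lt_0_compat; lra).
    pose proof (L1 ltac:(lra)). pose proof (L3 ltac:(lra)).
    pose proof (K2 ltac:(lra)). pose proof (K4 ltac:(lra)). lra.
Qed.

Lemma equilibrium_unique_of_slack B1 B2 B10 B20 b1 b2 c1 c2 : 0 < B1 -> 0 < B2 ->
  0 <= B10 -> 0 <= B20 -> B10 < B1 \/ B20 < B2 ->
  equilibrium B1 B2 B10 B20 b1 b2 -> equilibrium B1 B2 B10 B20 c1 c2 -> b1 = c1 /\ b2 = c2.
Proof.
  intros HB1 HB2 H10 H20 Hs Hb Hc.
  pose proof (equilibrium_total_pos _ _ _ _ _ _ HB1 HB2 H10 H20 Hb).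
  pose proof (equilibrium_total_pos _ _ _ _ _ _ HB1 HB2 H10 H20 Hc).
  pose proof (equilibrium_total_lt _ _ _ _ _ _ HB1 HB2 H10 H20 Hs Hb).
  pose proof (equilibrium_total_lt _ _ _ _ _ _ HB1 HB2 H10 H20 Hs Hc).
  destruct (equilibrium_first_order B1 B2 B10 B20 b1 b2) as [Fb1 Fb2]; try lra; [exact Hb |].
  destruct (equilibrium_first_order B1 B2 B10 B20 c1 c2) as [Fc1 Fc2]; try lra; [exact Hc |].
  destruct Hb as [[Hb1 _] [Hb2 _]], Hc as [[Hc1 _] [Hc2 _]].
  destruct (Rle_lt_dec (b1 + b2) (c1 + c2)).
  - apply (first_order_unique B1 B2 B10 B20); auto; lra.
  - destruct (first_order_unique B1 B2 B10 B20 c1 c2 b1 b2); auto; lra.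
Qed.

Lemma equilibrium_unique B1 B2 B10 B20 b1 b2 c1 c2 : 0 < B1 -> 0 < B2 ->
  0 <= B10 <= B1 -> 0 <= B20 <= B2 ->
  equilibrium B1 B2 B10 B20 b1 b2 -> equilibrium B1 B2 B10 B20 c1 c2 -> b1 = c1 /\ b2 = c2.
Proof.
  intros HB1 HB2 H1 H2 Hb Hc.
  destruct (Rlt_le_dec B10 B1) as [S1 | E1].
  { apply (equilibrium_unique_of_slack B1 B2 B10 B20); auto; lra. }
  destruct (Rlt_le_dec B20 B2) as [S2 | E2].
  { apply (equilibrium_unique_of_slack B1 B2 B10 B20); auto; lra. }
  destruct Hb as [[Hb1 _] [Hb2 _]], Hc as [[Hc1 _] [Hc2 _]]. split; lra.
Qed.

Lemma equilibrium_total_ge_free B1 B2 B10 B20 b1 b2 : 0 < B1 -> 0 < B2 ->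
  0 <= B10 -> 0 <= B20 -> equilibrium B1 B2 B10 B20 b1 b2 -> free_total (B1 + B2) <= b1 + b2.
Proof.
  intros HB1 HB2 H10 H20 He.
  pose proof (free_total_bounds (B1 + B2) ltac:(lra)) as Hfree.
  pose proof (equilibrium_total_pos _ _ _ _ _ _ HB1 HB2 H10 H20 He) as Hpos.
  destruct (Rlt_le_dec (b1 + b2) (B1 + B2)) as [HltB | HgeB]; [| lra].
  destruct (equilibrium_first_order B1 B2 B10 B20 b1 b2) as [[_ F1] [_ F2]]; try lra; [exact He |].
  destruct He as [[Hb1 _] [Hb2 _]].
  apply Rnot_lt_le. intros Hlt.
  pose proof (price_ratio_gt1 (B1 + B2) (b1 + b2) ltac:(lra) ltac:(lra)) as Hr.
  destruct (Rlt_le_dec b1 B1) as [h1 | h1]; destruct (Rlt_le_dec b2 B2) as [h2 | h2]; [| | | lra].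
  - pose proof (marginal_add_total B1 B2 b1 b2 ltac:(lra)).
    pose proof (F1 h1). pose proof (F2 h2).
    assert (0 < (2 - al) * (price_ratio (B1 + B2) (b1 + b2) - 1)) by (apply Rmult_lt_0_compat; lra).
    lra.
  - assert (b2 = B2) as -> by lra. specialize (F1 h1).
    replace b1 with (b1 + B2 - B2) in F1 at 2 by ring.
    pose proof (marginal_opponent_full_pos B1 B2 (b1 + B2) ltac:(lra) ltac:(lra) Hr). lra.
  - assert (b1 = B1) as -> by lra. specialize (F2 h2).
    rewrite (Rplus_comm B1 B2), (Rplus_comm B1 b2) in *.
    replace b2 with (b2 + B1 - B1) in F2 at 2 by ring.
    pose proof (marginal_opponent_full_pos B2 B1 (b2 + B1) ltac:(lra) ltac:(lra) Hr). lra.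
Qed.

Definition marginal_slope B x := al * price_ratio B x / x + al / (B - x).
Definition marginal_root Bi B x := (price_ratio B x - 1 + al * Bi / (B - x)) / marginal_slope B x.
Definition response Bi lo B x := clamp lo Bi (marginal_root Bi B x).
Definition excess B1 B2 B10 B20 x :=
  response B1 B10 (B1 + B2) x + response B2 B20 (B1 + B2) x - x.

Lemma marginal_slope_pos B x : 0 < x < B -> 0 < marginal_slope B x.
Proof.
  intros Hx. pose proof (price_ratio_pos B x). unfold marginal_slope.
  assert (0 < al * price_ratio B x / x) by (apply Rdiv_lt_0_compat; nra).
  assert (0 < al / (B - x)) by (apply Rdiv_lt_0_compat; lra). lra.
Qed.

Lemma marginal_root_eq Bi B x b : 0 < x < B ->
  marginal Bi B x b = (marginal_root Bi B x - b) * marginal_slope B x.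
Proof.
  intros Hx. pose proof (price_ratio_pos B x).
  unfold marginal, marginal_root, marginal_slope. field.
  repeat split; try lra. apply Rgt_not_eq.
  assert (0 < al * price_ratio B x * (B - x)) by (apply Rmult_lt_0_compat; nra). nra.
Qed.

Lemma first_order_response Bi lo B x : 0 < x < B -> lo <= Bi ->
  first_order Bi B lo x (response Bi lo B x).
Proof.
  intros Hx Hlo. unfold first_order, response.
  rewrite !marginal_root_eq by exact Hx. pose proof (marginal_slope_pos B x Hx).
  split; intros Hc.
  - pose proof (clamp_gt_lo lo Bi (marginal_root Bi B x) Hlo Hc). nra.
  - pose proof (clamp_lt_hi lo Bi (marginal_root Bi B x) Hlo Hc). nra.
Qed.

Lemma response_bounds Bi lo B x : lo <= Bi -> lo <= response Bi lo B x <= Bi.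
Proof. apply clamp_bounds. Qed.

Lemma price_ratio_ex_derive B x : 0 < x < B -> ex_derive (price_ratio B) x.
Proof.
  intros Hx. unfold price_ratio, macro_price, small_price, Rpower. auto_derive.
  repeat split; try apply Rgt_not_eq, exp_pos;
    repeat apply Rmult_lt_0_compat; try apply Rinv_0_lt_compat; lra.
Qed.

Lemma excess_continuity B1 B2 B10 B20 x : 0 < x < B1 + B2 ->
  continuity_pt (excess B1 B2 B10 B20) x.
Proof.
  intros Hx.
  assert (Hroot : forall Bi, continuity_pt (marginal_root Bi (B1 + B2)) x).
  { intros Bi. apply ex_derive_continuity_pt. pose proof (marginal_slope_pos (B1 + B2) x Hx).
    unfold marginal_root, marginal_slope in *. auto_derive.
    unfold Rminus, Rdiv in *. repeat split; try (apply price_ratio_ex_derive; exact Hx); apply Rgt_not_eq; lra. }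
  apply continuity_pt_minus; [apply continuity_pt_plus | apply continuity_pt_id];
    apply continuity_pt_clamp, Hroot.
Qed.

Lemma excess_free_total_nonneg B1 B2 B10 B20 : 0 < B1 -> 0 < B2 -> B10 <= B1 -> B20 <= B2 ->
  0 <= excess B1 B2 B10 B20 (free_total (B1 + B2)).
Proof.
  intros HB1 HB2 H1 H2. pose proof (free_total_bounds (B1 + B2) ltac:(lra)) as Hf.
  pose proof (price_ratio_free_total (B1 + B2) ltac:(lra)) as Hr.
  set (x := free_total (B1 + B2)) in *. set (q := x / (B1 + B2)).
  assert (Hq : 0 <= q <= 1) by (unfold q; split; [apply Rdiv_le_0_compat | apply Rle_div_l]; lra).
  assert (Hroot : forall Bi, marginal_root Bi (B1 + B2) x = Bi * q).
  { intros Bi. unfold marginal_root, marginal_slope, q. rewrite Hr. field. repeat split; apply Rgt_not_eq; nra. }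
  unfold excess, response. rewrite !Hroot.
  pose proof (clamp_ge B10 B1 (B1 * q) H1 ltac:(nra)).
  pose proof (clamp_ge B20 B2 (B2 * q) H2 ltac:(nra)).
  assert (B1 * q + B2 * q = x) by (unfold q; field; lra).
  lra.
Qed.

Lemma marginal_lo_nonneg Bi B c lo : 0 <= lo <= Bi -> Bi <= B -> 0 < c < B ->
  B - c <= al * (Bi - lo) -> 0 <= marginal Bi B c lo.
Proof.
  intros Hlo HBi Hc Hgap. unfold marginal. pose proof (price_ratio_pos B c).
  assert (al * lo / c <= 1) by (apply Rle_div_l; nra).
  assert (1 <= al * (Bi - lo) / (B - c)) by (apply Rle_div_r; lra).
  nra.
Qed.

Lemma marginal_root_sum_lt B1 B2 c : 0 < c < B1 + B2 -> price_ratio (B1 + B2) c < 1 ->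
  marginal_root B1 (B1 + B2) c + marginal_root B2 (B1 + B2) c < c.
Proof.
  intros Hc Hr. pose proof (price_ratio_pos (B1 + B2) c).
  pose proof (marginal_add B1 B2 c (marginal_root B1 (B1 + B2) c) (marginal_root B2 (B1 + B2) c) Hc) as Hsum.
  rewrite !marginal_root_eq, !Rminus_diag, !Rmult_0_l, Rplus_0_l in Hsum by exact Hc.
  set (h := marginal_root B1 (B1 + B2) c + marginal_root B2 (B1 + B2) c) in *.
  apply Rnot_le_lt. intros Hh.
  assert (al <= al * h / c) by (apply Rle_div_r; nra).
  assert (al * (B1 + B2 - h) / (B1 + B2 - c) <= al) by (apply Rle_div_l; nra).
  nra.
Qed.

Lemma excess_neg_of_slack B1 B2 B10 B20 : 0 < B1 -> 0 < B2 -> 0 <= B10 <= B1 -> 0 <= B20 < B2 ->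
  exists c, free_total (B1 + B2) < c < B1 + B2 /\ excess B1 B2 B10 B20 c < 0.
Proof.
  intros HB1 HB2 H1 H2.
  assert (Hm : exists m, 0 < m /\ m <= B2 - B20 /\ (B10 < B1 -> m <= B1 - B10)).
  { destruct (Rlt_le_dec B10 B1).
    - exists (Rmin (B1 - B10) (B2 - B20)).
      split; [apply Rmin_glb_lt; lra | split; [apply Rmin_r | intros; apply Rmin_l]].
    - exists (B2 - B20). split; [lra | split; [lra | intros; lra]]. }
  destruct Hm as [m [Hm [Hm2 Hm1]]].
  destruct (price_ratio_small_near_total (B1 + B2) ((1 - al) / 2) (al * m)) as [c [Hc [Hc0 Hr]]];
    [lra | lra | nra |].
  exists c. split; [split; [apply free_total_lt; lra | lra] |].
  pose proof (marginal_slope_pos (B1 + B2) c Hc0).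
  assert (Hroot : forall Bi lo, 0 <= lo <= Bi -> Bi <= B1 + B2 -> m <= Bi - lo ->
    lo <= marginal_root Bi (B1 + B2) c).
  { intros Bi lo Hlo HBi Hmlo.
    pose proof (marginal_lo_nonneg Bi (B1 + B2) c lo Hlo HBi Hc0 ltac:(nra)) as Hpos.
    rewrite marginal_root_eq in Hpos by exact Hc0. nra. }
  pose proof (clamp_le B20 B2 _ (Hroot B2 B20 ltac:(lra) ltac:(lra) Hm2)).
  unfold excess, response.
  destruct (Rlt_le_dec B10 B1) as [S1 | E1].
  - pose proof (clamp_le B10 B1 _ (Hroot B1 B10 ltac:(lra) ltac:(lra) (Hm1 S1))).
    pose proof (marginal_root_sum_lt B1 B2 c Hc0 ltac:(lra)). lra.
  - replace B10 with B1 by lra. rewrite clamp_id.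
    assert (al * m < B2) by nra.
    pose proof (marginal_opponent_full_neg B2 B1 c ltac:(split; lra) ltac:(lra)
      ltac:(rewrite Rplus_comm; lra)) as Hneg.
    rewrite (Rplus_comm B2 B1), marginal_root_eq in Hneg by exact Hc0. nra.
Qed.

Lemma equilibrium_exists_of_slack B1 B2 B10 B20 : 0 < B1 -> 0 < B2 ->
  0 <= B10 <= B1 -> 0 <= B20 < B2 -> exists b1 b2, equilibrium B1 B2 B10 B20 b1 b2.
Proof.
  intros HB1 HB2 H1 H2.
  pose proof (free_total_bounds (B1 + B2) ltac:(lra)) as Hf.
  destruct (excess_neg_of_slack B1 B2 B10 B20 HB1 HB2 H1 H2) as [c [Hc Hneg]].
  destruct (IVT_interv_decr (excess B1 B2 B10 B20) (free_total (B1 + B2)) c) as [x [Hx Hzero]];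
    [lra | intros a Ha; apply excess_continuity; lra | apply excess_free_total_nonneg; lra | exact Hneg |].
  unfold excess in Hzero.
  exists (response B1 B10 (B1 + B2) x), (response B2 B20 (B1 + B2) x).
  assert (Hsum : response B1 B10 (B1 + B2) x + response B2 B20 (B1 + B2) x = x) by lra.
  apply equilibrium_of_first_order; [lra | lra | apply response_bounds; lra | apply response_bounds; lra
    | rewrite Hsum; lra | | ]; rewrite Hsum; apply first_order_response; lra.
Qed.

Lemma equilibrium_exists B1 B2 B10 B20 : 0 < B1 -> 0 < B2 ->
  0 <= B10 <= B1 -> 0 <= B20 <= B2 -> exists b1 b2, equilibrium B1 B2 B10 B20 b1 b2.
Proof.
  intros HB1 HB2 H1 H2.
  destruct (Rlt_le_dec B20 B2) as [S2 | E2].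
  { apply equilibrium_exists_of_slack; lra. }
  destruct (Rlt_le_dec B10 B1) as [S1 | E1].
  { destruct (equilibrium_exists_of_slack B2 B1 B20 B10) as [b2 [b1 He]]; try lra.
    exists b1, b2. apply equilibrium_sym, He. }
  exists B1, B2. split; split; try lra; intros t Ht.
  - replace t with B1 by lra. lra.
  - replace t with B2 by lra. lra.
Qed.
End Game.

Theorem theorem2 (alpha Nm Nf R0 lamS B1 B2 B10 B20 : R) :
  0 < alpha < 1 -> 0 < Nm -> 0 < Nf -> 0 < R0 -> 1 < lamS ->
  0 < B1 -> 0 < B2 -> 0 <= B10 <= B1 -> 0 <= B20 <= B2 ->
  exists b1 b2,
    is_NE alpha Nm Nf R0 lamS B1 B2 B10 B20 b1 b2 /\
    (forall c1 c2, is_NE alpha Nm Nf R0 lamS B1 B2 B10 B20 c1 c2 ->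
       c1 = b1 /\ c2 = b2) /\
    Bfree alpha Nm Nf lamS B1 + Bfree alpha Nm Nf lamS B2 <= b1 + b2 /\
    Bfree alpha Nm Nf lamS B1 + Bfree alpha Nm Nf lamS B2 =
      eps alpha lamS * Nf * (B1 + B2) / (eps alpha lamS * Nf + Nm).
Proof.
  intros Hal HNm HNf HR0 Hlam HB1 HB2 H1 H2.
  pose proof (is_NE_equilibrium alpha Nm Nf R0 lamS Hal HNm HNf HR0 Hlam B1 B2 B10 B20) as HNE.
  assert (Hfree : Bfree alpha Nm Nf lamS B1 + Bfree alpha Nm Nf lamS B2 =
                  free_total alpha Nm Nf lamS (B1 + B2)).
  { assert (0 < eps alpha lamS) by apply Rpower_gt0.
    unfold Bfree, free_total. field. nra. }
  destruct (equilibrium_exists alpha Nm Nf R0 lamS Hal HNm HNf HR0 Hlam B1 B2 B10 B20 HB1 HB2 H1 H2)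
    as [b1 [b2 Hb]].
  exists b1, b2. rewrite Hfree. split; [| split; [| split]].
  - apply HNE; [lra | lra | exact Hb].
  - intros c1 c2 Hc. apply HNE in Hc; [| lra | lra].
    destruct (equilibrium_unique alpha Nm Nf R0 lamS Hal HNm HNf HR0 Hlam B1 B2 B10 B20 b1 b2 c1 c2)
      as [E1 E2]; auto.
  - apply (equilibrium_total_ge_free alpha Nm Nf R0 lamS Hal HNm HNf HR0 Hlam B1 B2 B10 B20);
      auto; lra.
  - reflexivity.
Qed.
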